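(* Let $G$ be a connected simple graph without bridges whose edge set is identified with $[d+1]$, let $B_1,\dots,B_n$ be the bases (spanning trees) of its graphic matroid, all of cardinality $k$, and let $P=\operatorname{tconv}\{-e_{B_1},\dots,-e_{B_n}\}\subseteq\mathbb{T}^d$ with $V=(-e_{B_1},\dots,-e_{B_n})$. Then the set of coarse types of the maximal cells of the tropical complex $\mathcal{C}_V$ is exactly the set of tuples $(t_1,\dots,t_{d+1})$ obtained as follows: choose an integer $d'\in\{0,1,\dots,d-k+1\}$ and pairwise distinct elements $i_1,i_2,\dots,i_{d'+1}\in[d+1]$ such that $[d+1]\setminus\{i_1,\dots,i_{d'}\}$ contains a basis of the matroid, and set $$t_j=\begin{cases} b_{\{i_1\},\emptyset}+b_{\emptyset,\{i_1,i_2,\dots,i_{d'+1}\}} & \text{if } j=i_1,\\ b_{\{i_l\},\{i_1,\dots,i_{l-1}\}} & \text{if } j=i_l \text{ with } 2\le l\le d'+1,\\ 0 & \text{otherwise.}\end{cases}$$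
   Context: Tropical arithmetic is min-plus: $a\oplus b=\min(a,b)$, $a\odot b=a+b$, extended componentwise on $\mathbb{R}^{d+1}$ (with $\lambda\odot x=(\lambda+x_1,\dots,\lambda+x_{d+1})$). The tropical torus is $\mathbb{T}^d=\mathbb{R}^{d+1}/\mathbb{R}(1,\dots,1)$. The tropical convex hull of $v_1,\dots,v_n$ is $\operatorname{tconv}\{v_1,\dots,v_n\}=\{\bigoplus_l \lambda_l\odot v_l:\lambda_l\in\mathbb{R}\}$. For $B\subseteq[d+1]$, $e_B=\sum_{i\in B}e_i$ where $e_i$ are the unit vectors of $\mathbb{R}^{d+1}$. For $m\in[d+1]$ let $\bar S_m=\{\xi\in\mathbb{T}^d:\xi_m=\min_i\xi_i\}$. For $V=(v_1,\dots,v_n)$ and $x\in\mathbb{T}^d$, the (fine) type is $\operatorname{type}_V(x)=(T_1,\dots,T_{d+1})$ with $T_m=\{l\in[n]: v_l\in x+\bar S_m\}$. The cells $\{x:\operatorname{type}_V(x)=\mathcal{T}\}$ are relatively open polyhedra, and their closures form a polyhedral subdivision $\mathcal{C}_V$ of $\mathbb{T}^d$, the tropical complex; maximal cells are the inclusion-maximal (full-dimensional) ones. The coarse type of a point is $(|T_1|,\dots,|T_{d+1}|)$, and the coarse type of a cell is the coarse type of its relative interior points. For $I,J\subseteq[d+1]$, $b_{I,J}$ denotes the number of bases $B$ of the matroid with $I\subseteq B$ and $J\cap B=\emptyset$. *)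

From HB Require Import structures.
From mathcomp Require Import all_boot all_order all_algebra.
From mathcomp Require Import reals.
Set Implicit Arguments. Unset Strict Implicit. Unset Printing Implicit Defensive.
Import Order.TTheory GRing.Theory Num.Theory.
Local Open Scope ring_scope.

Section Graph.
Variables (T : finType) (n : nat) (src tgt : 'I_n -> T).

Definition incident (e : 'I_n) (x y : T) : bool :=
  ((src e == x) && (tgt e == y)) || ((src e == y) && (tgt e == x)).

Definition adjE (B : {set 'I_n}) : rel T :=
  fun x y => [exists e in B, incident e x y].

Definition connected_on (B : {set 'I_n}) : bool :=
  [forall x, forall y, connect (adjE B) x y].

Definition acyclic (B : {set 'I_n}) : bool :=
  [forall e in B, ~~ connect (adjE (B :\ e)) (src e) (tgt e)].

(* bases of the graphic matroid of a connected graph = spanning trees *)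
Definition spanning_tree (B : {set 'I_n}) : bool :=
  connected_on B && acyclic B.

Definition simple_graph : Prop :=
  (forall e, src e != tgt e) /\
  (forall e f, incident e (src f) (tgt f) -> e = f).

Definition graph_connected : Prop := connected_on setT.

Definition bridgeless : Prop := forall e, connected_on (setT :\ e).

Definition bIJ (I J : {set 'I_n}) : nat :=
  #|[set B | spanning_tree B & (I \subset B) && [disjoint J & B]]|.

End Graph.

Section Tropical.
Variables (R : realType) (T : finType) (n : nat) (src tgt : 'I_n -> T).

Definition negeB (B : {set 'I_n}) : 'I_n -> R :=
  fun i => if i \in B then -1 else 0.

(* v ∈ x + S̄_m, i.e. (v - x)_m = min_i (v - x)_i *)
Definition in_sector (v x : 'I_n -> R) (m : 'I_n) : bool :=
  [forall i, v m - x m <= v i - x i].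

(* fine type of x w.r.t. V = (-e_B)_{B basis}; T_m is the set of bases B
   (identifying the index l with B_l) such that -e_B ∈ x + S̄_m *)
Definition ftype (x : 'I_n -> R) : {ffun 'I_n -> {set {set 'I_n}}} :=
  [ffun m => [set B | spanning_tree src tgt B && in_sector (negeB B) x m]].

Definition ctype (x : 'I_n -> R) : {ffun 'I_n -> nat} :=
  [ffun m => #|ftype x m|].

(* x lies in (the relative interior of) a maximal, i.e. full-dimensional,
   cell: a whole neighbourhood of x has the same fine type *)
Definition in_maximal_cell (x : 'I_n -> R) : Prop :=
  exists2 eps : R, 0 < eps &
    forall y : 'I_n -> R, (forall i, `|y i - x i| < eps) -> ftype y = ftype x.

End Tropical.

(* the tuple t built from the sequence s = [:: i_1; ...; i_{d'+1}] *)
Definition coarse_formula (T : finType) (n : nat) (src tgt : 'I_n -> T)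
  (s : seq 'I_n) : {ffun 'I_n -> nat} :=
  [ffun j =>
     if s is i1 :: _ then
       if j == i1 then bIJ src tgt [set i1] set0 + bIJ src tgt set0 [set x in s]
       else if j \in s then bIJ src tgt [set j] [set x in take (index j s) s]
       else 0%N
     else 0%N].

From HB Require Import structures.
From mathcomp Require Import all_boot all_order all_algebra.
From mathcomp Require Import reals.
From mathcomp Require Import lra zify.
Import Order.TTheory GRing.Theory Num.Theory.

(* A point [x] lies in a maximal cell iff, for every spanning tree [B], the
   minimum of [-e_B - x] is attained at a single coordinate, robustly under
   perturbation. Moving [x] inside its cell we may assume no two coordinates
   differ by 0 or 1. List the coordinates in decreasing order of [x] and keep
   those [i] with [x i1 - x i < 1]; the minimiser for [B] is then the first kept
   coordinate lying in [B], or [i1] if there is none, and counting trees by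
   their minimiser gives the formula. Kept coordinates after the shortest
   prefix met by every tree are never minimisers and can be dropped, which
   gives the normal form, and then [d' + k <= d + 1] because the prefix of
   length [d'] avoids a tree. Conversely every sequence is realised by the
   point with coordinate [-l / (d' + 1)] at [i_(l+1)] and [-2] elsewhere. *)

Set Implicit Arguments.
Unset Strict Implicit.
Unset Printing Implicit Defensive.

Section FirstHit.
Variables (T : eqType) (x0 : T).
Implicit Types (s : seq T) (A : {pred T}).

Definition first_hit s A : T := nth x0 s (find [in A] s).

Lemma first_hit_mem s A : first_hit s A \in x0 :: s.
Proof.
rewrite /first_hit inE; case: (ltnP (find [in A] s) (size s)) => [lt|le].
  by rewrite mem_nth ?orbT.
by rewrite nth_default ?eqxx.
Qed.

Lemma first_hit_hasN s A : ~~ has [in A] s -> first_hit s A = x0.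
Proof. by move=> /hasNfind fs; rewrite /first_hit fs nth_default. Qed.

Lemma first_hit_in s A : has [in A] s -> first_hit s A \in A /\ first_hit s A \in s.
Proof.
by move=> hs; split; [apply: nth_find | rewrite mem_nth // -has_find].
Qed.

Lemma first_hit_index_lt s A j : has [in A] s -> j \in A -> j \in s ->
  j != first_hit s A -> (find [in A] s < index j s)%N.
Proof.
move=> hs jA js nj; rewrite ltn_neqAle; apply/andP; split.
  by apply: contra nj; rewrite /first_hit => /eqP ->; rewrite nth_index.
rewrite leqNgt; apply/negP => lt.
by have := before_find x0 lt; rewrite nth_index // jA.
Qed.

Lemma first_hit_take s A m :
  has [in A] (take m s) -> first_hit (take m s) A = first_hit s A.
Proof.
move=> hm; have hs : has [in A] s by rewrite -(cat_take_drop m s) has_cat hm.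
have Ef : find [in A] (take m s) = find [in A] s.
  by rewrite -{2}(cat_take_drop m s) find_cat hm.
by rewrite /first_hit Ef nth_take // -has_take.
Qed.

Lemma first_hitE s A j : j \in s ->
  (first_hit s A == j) =
  (j \in A) && ~~ has [in A] (take (index j s) s) || (j == x0) && ~~ has [in A] s.
Proof.
move=> js; have [hs|hsN] := boolP (has [in A] s); last first.
  rewrite first_hit_hasN // andbT eq_sym.
  suff -> : (j \in A) = false by [].
  by apply: contraNF hsN => jA; apply/hasP; exists j.
rewrite andbF orbF; have [fh _] := first_hit_in hs.
apply/eqP/andP => [<-|[jA]]; first split => //.
  by rewrite has_take // -leqNgt index_nth // -has_find.
rewrite has_take_leq ?index_size // -leqNgt => le.
apply/eqP; apply: contraLR le => nj; rewrite -ltnNge.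
by apply: first_hit_index_lt; rewrite // eq_sym.
Qed.

Lemma pairwise_first_hit (r : rel T) s A : pairwise r s -> has [in A] s ->
  forall j, j \in A -> j \in s -> j != first_hit s A -> r (first_hit s A) j.
Proof.
move=> /(pairwiseP x0) rs hs j jA js nj.
have := rs _ _ _ _ (first_hit_index_lt hs jA js nj); rewrite nth_index //.
by apply; rewrite inE ?index_mem // -has_find.
Qed.

End FirstHit.

Local Open Scope ring_scope.

Section SpanningTrees.
Variables (T : finType) (n : nat) (src tgt : 'I_n -> T).

Lemma adjE_sym B : symmetric (adjE src tgt B).
Proof. by move=> u v; apply: eq_existsb => e; rewrite /incident orbC. Qed.

Lemma connected_on_setD1 B e : connected_on src tgt B ->
  connect (adjE src tgt (B :\ e)) (src e) (tgt e) -> connected_on src tgt (B :\ e).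
Proof.
move=> /forallP conB cycle; apply/forallP => u; apply/forallP => v.
apply: connect_sub (forallP (conB u) v) => a b /existsP [f /andP [fB inc]].
have [fe|fe] := eqVneq f e; last first.
  by apply: connect1; apply/existsP; exists f; rewrite !inE fe fB.
move: inc; rewrite /incident fe => /orP [] /andP [/eqP <- /eqP <-] //.
by rewrite (sym_connect_sym (adjE_sym _)).
Qed.

(* A minimal connected edge set is acyclic: an edge closing a cycle could be
   deleted. *)
Lemma exists_spanning_tree : graph_connected src tgt ->
  exists B, spanning_tree src tgt B.
Proof.
move=> con; have [B /minsetP [conB minB] _] := minset_exists con.
exists B; rewrite /spanning_tree conB; apply/forallP => e; apply/implyP => eB.
apply/negP => /(connected_on_setD1 conB) /minB /(_ (subD1set B e)) BeB.
by have := properD1 eB; rewrite BeB properE subxx.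
Qed.

Definition hit_type (i1 : 'I_n) (s : seq 'I_n) : {ffun 'I_n -> nat} :=
  [ffun m => #|[set B | spanning_tree src tgt B & first_hit i1 s B == m]|].

Lemma disjoint_set_seq (l : seq 'I_n) (B : {set 'I_n}) :
  [disjoint [set x in l] & B] = ~~ has [in B] l.
Proof. by rewrite -disjoint_has; apply: eq_disjoint => y; rewrite inE. Qed.

Lemma hit_type_coarse_formula i1 rest :
  hit_type i1 (i1 :: rest) = coarse_formula src tgt (i1 :: rest).
Proof.
set s := i1 :: rest; have i1s : i1 \in s := mem_head i1 rest.
apply/ffunP => j; rewrite !ffunE /= /bIJ.
have [->|nj] := eqVneq j i1.
  (* the sum in [coarse_formula] is the ring addition on [nat] *)
  rewrite -[RHS]/(_ + _)%N -cardsUI [_ :&: _](_ : _ = set0) ?cards0 ?addn0; last first.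
    apply/setP => B; rewrite !inE sub1set disjoint_set_seq.
    apply/negP => /andP [/and3P [_ i1B _] /and3P [_ _ /hasPn /(_ i1 i1s)]].
    by rewrite i1B.
  apply: eq_card => B; rewrite !inE (first_hitE _ _ i1s) /= eqxx /= sub1set sub0set.
  rewrite -setI_eq0 set0I eqxx disjoint_set_seq andbT /s /=.
  by case: spanning_tree; case: (i1 \in B).
have [js|jNs] := boolP (j \in s).
  apply: eq_card => B; rewrite !inE (first_hitE _ _ js) (negbTE nj) /= orbF.
  by rewrite sub1set disjoint_set_seq [i1 == j]eq_sym (negbTE nj).
apply/eqP; rewrite cards_eq0; apply/eqP/setP => B; rewrite !inE.
apply/negP => /andP [_ /eqP hj]; have := first_hit_mem i1 s B.
by rewrite hj inE (negbTE nj) (negbTE jNs).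
Qed.

Lemma hit_type_take x0 s m :
  (forall B, spanning_tree src tgt B -> has [in B] (take m s)) ->
  hit_type x0 (take m s) = hit_type x0 s.
Proof.
move=> meet; apply/ffunP => j; rewrite !ffunE; apply: eq_card => B; rewrite !inE.
by case stB: (spanning_tree _ _ B); rewrite //= first_hit_take ?meet.
Qed.

(* Cut [i1 :: rest] just after the shortest prefix met by every spanning tree:
   later entries are never the first hit of a tree. *)
Lemma hit_type_prefix i1 rest B0 : spanning_tree src tgt B0 ->
  exists2 m, (m <= size rest)%N &
    (exists2 B, spanning_tree src tgt B &
       [disjoint [set x in take m (i1 :: rest)] & B])
    /\ hit_type i1 (take m.+1 (i1 :: rest)) = hit_type i1 (i1 :: rest).
Proof.
move=> stB0; set s := i1 :: rest.
pose avoided m := (m <= size rest)%N &&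
  [exists B, spanning_tree src tgt B && [disjoint [set x in take m s] & B]].
have av0 : avoided 0%N.
  by apply/andP; split => //; apply/existsP; exists B0; rewrite stB0 disjoint_set_seq.
have ub m : avoided m -> (m <= size rest)%N by case/andP.
have [m /andP [m_le /existsP [B /andP [stB dB]]] max_m] :=
  ex_maxnP (ex_intro avoided 0%N av0) ub.
exists m => //; split; first by exists B.
have [lt|ge] := ltnP m (size rest); last by rewrite take_oversize.
apply: hit_type_take => B' stB'; rewrite -[has _ _]negbK -disjoint_set_seq.
apply/negP => dB'; suff /max_m : avoided m.+1 by rewrite ltnn.
by rewrite /avoided lt; apply/existsP; exists B'; rewrite stB'.
Qed.

End SpanningTrees.

Section TropicalTypes.
Variables (R : realType) (T : finType) (n : nat) (src tgt : 'I_n -> T).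
Implicit Types (x v : 'I_n -> R).

Lemma in_sector_strict v x m :
  (forall i, i != m -> v m - x m < v i - x i) ->
  forall m', in_sector v x m' = (m' == m).
Proof.
move=> vm m'; have [->|ne] := eqVneq m' m.
  by apply/forallP => i; have [->//|/vm/ltW] := eqVneq i m.
by apply/negP => /forallP /(_ m); have := vm _ ne; lra.
Qed.

Lemma in_maximal_cell_margin x dl (M : {set 'I_n} -> 'I_n) :
  0 < dl ->
  (forall B i, i != M B -> negeB R B (M B) - x (M B) + dl < negeB R B i - x i) ->
  in_maximal_cell src tgt x.
Proof.
move=> dl0 xM; exists (dl / 2) => [|y yx]; first lra.
apply/ffunP => m; rewrite !ffunE; apply/setP => B; rewrite !inE.
have near i : x i - dl / 2 < y i < x i + dl / 2.
  by have := yx i; rewrite ltr_norml => /andP [h1 h2]; apply/andP; split; lra.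
rewrite (in_sector_strict (m := M B)) => [|i /xM]; last first.
  by have /andP [? ?] := near i; have /andP [? ?] := near (M B); lra.
by rewrite (in_sector_strict (m := M B)) // => i /xM; lra.
Qed.

Lemma negeB_in (B : {set 'I_n}) i : i \in B -> negeB R B i = -1 :> R.
Proof. by rewrite /negeB => ->. Qed.

Lemma negeB_notin (B : {set 'I_n}) i : i \notin B -> negeB R B i = 0 :> R.
Proof. by rewrite /negeB => /negbTE ->. Qed.

(* [i1 :: rest] lists, in strictly decreasing order of [x], exactly the
   coordinates less than 1 below [x i1]; [dl] is a uniform margin in all
   these inequalities. *)
Definition staircase x (i1 : 'I_n) (rest : seq 'I_n) (dl : R) : Prop :=
  [/\ pairwise (fun a b => x b + dl < x a) (i1 :: rest),
      forall i, i \notin i1 :: rest -> x i + 1 + dl < x i1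
    & forall i, i \in i1 :: rest -> x i1 + dl < x i + 1].

Lemma staircase_top x i1 rest dl : 0 <= dl -> staircase x i1 rest dl ->
  forall j, j != i1 -> x j + dl < x i1.
Proof.
move=> dl_ge0 [/= /andP [/allP top _] out _] j nj.
have [jr|jr] := boolP (j \in rest); first exact: top.
by have := out j; rewrite inE negb_or nj jr => /(_ isT); lra.
Qed.

Lemma first_hit_argmin x i1 rest dl (B : {set 'I_n}) i :
  0 <= dl -> staircase x i1 rest dl -> i != first_hit i1 (i1 :: rest) B ->
  negeB R B (first_hit i1 (i1 :: rest) B) - x (first_hit i1 (i1 :: rest) B) + dl
    < negeB R B i - x i.
Proof.
move=> dl_ge0 stair; have top := staircase_top dl_ge0 stair.
case: stair => down out inside.
have [hs|hsN] := boolP (has [in B] (i1 :: rest)); last first.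
  rewrite first_hit_hasN // => ni.
  have i1B : i1 \notin B.
    by apply: contra hsN => i1B; apply/hasP; exists i1; rewrite ?mem_head.
  have := negeB_notin i1B; have [iB|iB] := boolP (i \in B); last first.
    by have := negeB_notin iB; have := top _ ni; lra.
  have /out : i \notin i1 :: rest by apply: contra hsN => is_; apply/hasP; exists i.
  by have := negeB_in iB; lra.
have [hB h_s] := first_hit_in i1 hs.
have after_h := pairwise_first_hit (x0 := i1) down hs.
move: (first_hit _ _ _) hB h_s after_h => h hB h_s after_h nh.
have := inside _ h_s; have := negeB_in hB; have [iB|iB] := boolP (i \in B); last first.
  by have := negeB_notin iB; have [->|/top] := eqVneq i i1; lra.
have := negeB_in iB; have [is_|/out] := boolP (i \in i1 :: rest); last first.
  by have [->|/top] := eqVneq i i1; lra.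
by have := after_h _ iB is_ nh; lra.
Qed.

Lemma ctype_staircase x i1 rest dl : 0 <= dl -> staircase x i1 rest dl ->
  ctype src tgt x = hit_type src tgt i1 (i1 :: rest).
Proof.
move=> dl_ge0 stair; apply/ffunP => m; rewrite !ffunE; apply: eq_card => B.
rewrite !inE eq_sym; congr (_ && _); apply: in_sector_strict => i.
by move/(first_hit_argmin dl_ge0 stair); lra.
Qed.

Lemma staircase_maximal_cell x i1 rest dl : 0 < dl -> staircase x i1 rest dl ->
  in_maximal_cell src tgt x.
Proof.
move=> dl_gt0 stair.
apply: (@in_maximal_cell_margin x dl (first_hit i1 (i1 :: rest)) dl_gt0).
by move=> B i; apply: first_hit_argmin (ltW dl_gt0) stair.
Qed.

Lemma staircase_witness i1 rest : uniq (i1 :: rest) ->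
  exists x, exists2 dl, 0 < dl & staircase x i1 rest dl.
Proof.
set s := i1 :: rest => us; set u : R := (size s)%:R^-1.
have u_gt0 : 0 < u by rewrite invr_gt0 ltr0n.
have Nu : (size s)%:R * u = 1 by rewrite mulfV // pnatr_eq0.
pose x i : R := if i \in s then - ((index i s)%:R * u) else -2.
have x_nth k : (k < size s)%N -> x (nth i1 s k) = - (k%:R * u).
  by move=> lt; rewrite /x mem_nth // index_uniq.
have x_i1 : x i1 = 0 by rewrite /x mem_head /= eqxx mul0r oppr0.
have u_le1 : u <= 1.
  have : 1 <= (size s)%:R :> R by rewrite ler1n.
  nra.
exists x, (u / 2); first lra.
split.
- apply/(pairwiseP i1) => a b; rewrite !inE => a_lt b_lt ab.
  rewrite !x_nth //; have : (a%:R + 1 : R) <= b%:R by rewrite natr1 ler_nat.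
  nra.
- by move=> i iNs; rewrite x_i1 /x (negbTE iNs); lra.
- move=> i is_; rewrite x_i1 /x is_.
  have : ((index i s)%:R + 1 : R) <= (size s)%:R by rewrite natr1 ler_nat index_mem.
  nra.
Qed.

End TropicalTypes.

Lemma addr_neq0 (R : numDomainType) (a b : R) :
  b != 0 -> (a != 0 -> `|b| < `|a|) -> a + b != 0.
Proof.
move=> b_neq0 ba; have [->|a_neq0] := eqVneq a 0; first by rewrite add0r.
apply: contraTneq (ba a_neq0) => /eqP; rewrite addr_eq0 => /eqP ->.
by rewrite normrN ltxx.
Qed.

Section GenericPoints.
Variables (R : realType) (n : nat).
Implicit Types (x : 'I_n -> R).

Definition generic x := forall i j, i != j -> x i != x j /\ x i != x j + 1.

(* Shifting coordinate [i] by [eta * i] breaks every tie [x i - x j = c],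
   [c \in {0, 1}], once [eta * n] is below the smallest nonzero gap. *)
Lemma perturb_generic x eps : 0 < eps ->
  exists2 y, (forall i, `|y i - x i| < eps) & generic y.
Proof.
move=> eps_gt0; pose gap (p : 'I_n * 'I_n * bool) := x p.1.1 - x p.1.2 - p.2%:R.
pose e := \big[Num.min/eps]_(p | gap p != 0) `|gap p|.
have e_gt0 : 0 < e by apply/bigmin_gtP; split => // p; rewrite normr_gt0.
have e_le_eps : e <= eps by apply: bigmin_le_id.
have e_le_gap p : gap p != 0 -> e <= `|gap p| by move=> ?; apply: bigmin_le_cond.
pose eta := e / (n%:R + 1).
have eta_gt0 : 0 < eta by rewrite divr_gt0 // ltr_wpDl.
have eta_small k : (k <= n)%N -> eta * k%:R < e.
  by rewrite /eta mulrAC ltr_pdivrMr ?ltr_wpDl // ltr_pM2l // natr1 ltr_nat.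
exists (fun i => x i + eta * i%:R) => [i|i j ij].
  rewrite addrC addKr normrM normr_nat gtr0_norm //.
  exact: lt_le_trans (eta_small _ (ltnW (ltn_ord i))) e_le_eps.
have shift_small : `|eta * (i%:R - j%:R)| < e.
  rewrite normrM gtr0_norm //; apply: le_lt_trans (eta_small _ (leqnn n)).
  rewrite ler_pM2l // ler_norml.
  have i_le : (i%:R : R) <= n%:R by rewrite ler_nat ltnW.
  have j_le : (j%:R : R) <= n%:R by rewrite ler_nat ltnW.
  have i_ge0 : (0 : R) <= i%:R by [].
  have j_ge0 : (0 : R) <= j%:R by [].
  by apply/andP; split; lra.
have shift_neq0 : eta * (i%:R - j%:R) != 0.
  by rewrite mulf_eq0 negb_or gt_eqF //= subr_eq0 eqr_nat.
have tie (c : bool) : x i + eta * i%:R - (x j + eta * j%:R) - c%:R != 0.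
  have -> : x i + eta * i%:R - (x j + eta * j%:R) - c%:R
            = gap (i, j, c) + eta * (i%:R - j%:R) by rewrite /gap /= mulrBr; lra.
  apply: addr_neq0 => // /e_le_gap; exact: lt_le_trans.
split; [have := tie false | have := tie true]; rewrite /= ?mulr0n ?subr0 subr_eq0 //.
by rewrite subr_eq [1 + _]addrC.
Qed.

(* For generic [x], list the coordinates in decreasing order and keep those
   within distance 1 of the largest one. *)
Lemma generic_staircase x : (0 < n)%N -> generic x ->
  exists i1 rest, uniq (i1 :: rest) /\ staircase x i1 rest 0.
Proof.
move=> n_gt0 gen; pose s0 := sort (fun a b => x b <= x a) (enum 'I_n).
have s0_perm : perm_eq s0 (enum 'I_n) by apply: permEl; apply: perm_sort.
have s0_all i : i \in s0 by rewrite (perm_mem s0_perm) mem_enum.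
case Es0: s0 => [|i1 r]; first by move: (s0_all (Ordinal n_gt0)); rewrite Es0.
pose near1 := fun j => x i1 < x j + 1.
have Es : filter near1 s0 = i1 :: filter near1 r.
  by rewrite Es0 /= /near1 ifT //; lra.
exists i1, (filter near1 r); rewrite -Es; split.
  by rewrite filter_uniq // (perm_uniq s0_perm) enum_uniq.
split.
- have pw : pairwise [rel a b | (x b <= x a) && (a != b)] s0.
    rewrite pairwise_relI -uniq_pairwise (perm_uniq s0_perm) enum_uniq andbT.
    rewrite -sorted_pairwise => [|b a c ab bc]; last exact: le_trans bc ab.
    by apply: sort_sorted => a b; apply: le_total.
  rewrite -Es; apply: sub_pairwise (pairwise_filter near1 pw).
  by move=> a b /andP [ba /gen [ab _]]; rewrite addr0 lt_neqAle eq_sym ab.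
- move=> i; rewrite -Es mem_filter s0_all andbT /near1 addr0 -leNgt le_eqVlt.
  case/orP => [|//].
  have [<- /eqP|i_neq] := eqVneq i1 i; first lra.
  by case: (gen _ _ i_neq) => _; rewrite eq_sym => /negbTE ->.
- by move=> i; rewrite -Es mem_filter addr0 => /andP [].
Qed.

End GenericPoints.

Theorem mainTheorem1 (R : realType) (T : finType) (d k : nat)
    (src tgt : 'I_d.+1 -> T) :
  simple_graph src tgt ->
  graph_connected src tgt ->
  bridgeless src tgt ->
  (forall B : {set 'I_d.+1}, spanning_tree src tgt B -> #|B| = k) ->
  forall t : {ffun 'I_d.+1 -> nat},
    (exists2 x : 'I_d.+1 -> R, in_maximal_cell src tgt x & ctype src tgt x = t)
    <->
    (exists (d' : nat) (s : seq 'I_d.+1),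
       [/\ (d' <= d.+1 - k)%N, size s = d'.+1, uniq s,
           (exists2 B : {set 'I_d.+1}, spanning_tree src tgt B &
              [disjoint [set x in take d' s] & B])
         & t = coarse_formula src tgt s]).
Proof.
move=> _ con _ card_k t; split.
- case=> x [eps eps_gt0 cell] <-.
  have [y y_near y_gen] := perturb_generic x eps_gt0.
  have [i1 [rest [us stair]]] := generic_staircase (ltn0Sn d) y_gen.
  have [B0 stB0] := exists_spanning_tree con.
  have [m m_le [[B stB dB] hit_eq]] := hit_type_prefix i1 rest stB0.
  have m_le_s : (m <= size (i1 :: rest))%N by apply: leqW.
  exists m, (take m.+1 (i1 :: rest)); split.
  + set A := [set x in take m (i1 :: rest)].
    have cardA : #|A| = m.
      by rewrite cardsE (card_uniqP (take_uniq m us)) size_takel.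
    have [_] := leq_card_setU A B.
    rewrite dB cardA (card_k _ stB) => /eqP cardAB.
    by have := max_card (A :|: B); rewrite card_ord cardAB; lia.
  + by rewrite size_takel.
  + exact: take_uniq.
  + by exists B; rewrite // take_takel.
  have -> : ctype src tgt x = ctype src tgt y by rewrite /ctype (cell y y_near).
  rewrite (ctype_staircase src tgt (lexx 0) stair) -hit_eq /=.
  exact: hit_type_coarse_formula.
- case=> d' [s [_ size_s us _ ->]]; case: s size_s us => [//|i1 rest] _ us.
  have [x [dl dl_gt0 stair]] := staircase_witness R us.
  exists x; first exact: (staircase_maximal_cell src tgt dl_gt0 stair).
  by rewrite (ctype_staircase src tgt (ltW dl_gt0) stair) hit_type_coarse_formula.
Qed.
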